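(* Let $S$ be an additively reduced semidomain and $G$ a torsion-free abelian group. If a nonzero $f=\sum_{i=0}^\infty s_ix^{g_i}\in S[\![G]\!]$ satisfies $g_1-g_0<g_{i+1}-g_i$ for every $i\in\mathbb{N}$ (i.e. every $i\ge1$), then $f$ is monolithic.
   Context: A semidomain is a subsemiring (containing $0$ and $1$) of an integral domain. $S$ is additively reduced if $0$ is the only invertible element of $(S,+)$. $G$ carries a fixed total order compatible with addition. $S[\![G]\!]=\{\sum_{i=0}^\infty s_ix^{g_i} : s_i\in S,\ g_i\in G,\ g_i<g_{i+1}\}$ with operations defined as for polynomials; elements are written so that $s_i=0$ implies $s_{i+1}=0$; $\operatorname{supp}(f)=\{g_i: s_i\neq0\}$. A nonzero $f$ is monolithic if $f=pq$ with $p,q\in S[\![G]\!]$ implies one of $p,q$ is a monomial $sx^g$. *)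

From HB Require Import structures.
From mathcomp Require Import all_boot all_order all_algebra.
Set Implicit Arguments. Unset Strict Implicit. Unset Printing Implicit Defensive.
Import Order.TTheory GRing.Theory Num.Theory.
Local Open Scope ring_scope.

Definition semidomain (R : idomainType) (S : pred R) : Prop :=
  [/\ 0 \in S, 1 \in S,
      (forall x y, x \in S -> y \in S -> x + y \in S) &
      (forall x y, x \in S -> y \in S -> x * y \in S)].

Definition additively_reduced (R : idomainType) (S : pred R) : Prop :=
  forall x, x \in S -> (exists2 y, y \in S & x + y = 0) -> x = 0.

Definition torsion_free (G : zmodType) : Prop :=
  forall (n : nat) (g : G), g *+ n.+1 = 0 -> g = 0.

Definition ordered_group (G : zmodType) (lt : rel G) : Prop :=
  [/\ (forall a, ~~ lt a a),
      (forall a b c, lt a b -> lt b c -> lt a c),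
      (forall a b, a != b -> lt a b || lt b a) &
      (forall a b c, lt a b -> lt (a + c) (b + c))].

(* Elements of S[[G]] are represented by their coefficient function f : G -> R.
   [represents S lt f s g] says f = \sum_i s_i x^{g_i} with s_i \in S,
   g_i < g_{i+1}, and s_i = 0 -> s_{i+1} = 0. *)
Definition represents (R : idomainType) (S : pred R) (G : zmodType) (lt : rel G)
  (f : G -> R) (s : nat -> R) (g : nat -> G) : Prop :=
  [/\ (forall i, s i \in S),
      (forall i, lt (g i) (g i.+1)),
      (forall i, s i = 0 -> s i.+1 = 0),
      (forall i, f (g i) = s i) &
      (forall h, (forall i, g i != h) -> f h = 0)].

Definition in_series (R : idomainType) (S : pred R) (G : zmodType) (lt : rel G)
  (f : G -> R) : Prop :=
  exists s g, represents S lt f s g.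

(* f = p * q, with product defined as for polynomials: the coefficient of
   x^h in p q is the (finite) sum of p_a q_b over a + b = h. *)
Definition is_product (R : idomainType) (G : zmodType) (p q f : G -> R) : Prop :=
  forall h : G, exists l : seq (G * G),
    [/\ uniq l,
        (forall a b, (a, b) \in l <-> [/\ p a != 0, q b != 0 & a + b = h]) &
        f h = \sum_(ab <- l) p ab.1 * q ab.2].

Definition monomial (R : idomainType) (G : zmodType) (p : G -> R) : Prop :=
  exists (c : R) (m : G), forall h, p h = if h == m then c else 0.

Definition monolithic (R : idomainType) (S : pred R) (G : zmodType) (lt : rel G)
  (f : G -> R) : Prop :=
  (exists h, f h != 0) /\
  forall p q : G -> R, in_series S lt p -> in_series S lt q ->
    is_product p q f -> monomial p \/ monomial q.

(** Since S is additively reduced, the coefficients of a product p q are sums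
    of elements of S that cannot cancel, so the support of p q is exactly
    supp p + supp q.  If neither p nor q is a monomial, let a0 < a1 and
    b0 < b1 be the two smallest exponents of p and q.  Then g0 = a0 + b0 and
    g1 >= min (a1 + b0, a0 + b1), say g1 - g0 >= a1 - a0.  But a0 + b1 and
    a1 + b1 are two exponents of f above g0 at distance a1 - a0 <= g1 - g0,
    whereas the gap condition forces consecutive exponents g_j < g_(j+1)
    beyond g0 to be more than g1 - g0 apart. *)

From mathcomp Require Import all_boot all_order all_algebra.
From Stdlib Require Import Classical.
Import GRing.Theory.
Local Open Scope ring_scope.
Set Implicit Arguments. Unset Strict Implicit.

Section OrderedGroup.
Variables (G : zmodType) (lt : rel G).
Hypothesis Hlt : ordered_group lt.

Definition leG a b := (a == b) || lt a b.

Lemma ltG_irr a : ~~ lt a a. Proof. by case: Hlt. Qed.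

Lemma ltG_trans a b c : lt a b -> lt b c -> lt a c.
Proof. by case: Hlt => _ + _ _; apply. Qed.

Lemma ltG_addr a b c : lt a b -> lt (a + c) (b + c).
Proof. by case: Hlt => _ _ _; apply. Qed.

Lemma ltG_addl a b c : lt a b -> lt (c + a) (c + b).
Proof. by rewrite ![c + _]addrC; apply: ltG_addr. Qed.

Lemma ltG_leG_false a b : lt a b -> leG b a -> False.
Proof.
move=> ltab /orP[/eqP eba | ltba]; first by move: ltab; rewrite eba (negbTE (ltG_irr a)).
by have := ltG_trans ltab ltba; rewrite (negbTE (ltG_irr a)).
Qed.

Lemma leG_ltG_trans a b c : leG a b -> lt b c -> lt a c.
Proof. by case/orP=> [/eqP -> // | ltab]; apply: ltG_trans. Qed.

Lemma leG_trans a b c : leG a b -> leG b c -> leG a c.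
Proof.
case/orP=> [/eqP -> // | ltab] /orP[/eqP <- | ltbc]; first by rewrite /leG ltab orbT.
by rewrite /leG (ltG_trans ltab ltbc) orbT.
Qed.

Lemma leG_addr a b c : leG a b -> leG (a + c) (b + c).
Proof. by case/orP=> [/eqP -> | /(ltG_addr c) ltab]; rewrite /leG ?eqxx ?ltab ?orbT. Qed.

Lemma leG_add a b c d : leG a b -> leG c d -> leG (a + c) (b + d).
Proof.
move=> leab lecd; apply: (@leG_trans _ (b + c)); first exact: leG_addr.
by rewrite ![b + _]addrC; apply: leG_addr.
Qed.

Lemma leG_refl a : leG a a. Proof. by rewrite /leG eqxx. Qed.

Lemma leG_anti a b : leG a b -> leG b a -> a = b.
Proof. by case/orP=> [/eqP -> // | ltab] /(ltG_leG_false ltab). Qed.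

Variable g : nat -> G.
Hypothesis g_incr : forall i, lt (g i) (g i.+1).

Lemma ltG_incr i j : (i < j)%N -> lt (g i) (g j).
Proof.
elim: j => // j IH; rewrite ltnS leq_eqVlt => /orP[/eqP -> // | /IH ltij].
exact: ltG_trans ltij (g_incr j).
Qed.

Lemma leG_incr i j : (i <= j)%N -> leG (g i) (g j).
Proof.
by rewrite leq_eqVlt => /orP[/eqP -> | /ltG_incr ltij]; rewrite /leG ?eqxx ?ltij ?orbT.
Qed.

Lemma incr_ltG i j : lt (g i) (g j) -> (i < j)%N.
Proof. by move=> ltij; case: ltnP => // /leG_incr /(ltG_leG_false ltij). Qed.

End OrderedGroup.

Section Representation.
Variables (R : idomainType) (S : pred R) (G : zmodType) (lt : rel G).
Hypothesis Hlt : ordered_group lt.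
Variables (f : G -> R) (s : nat -> R) (g : nat -> G).
Hypothesis Hf : represents S lt f s g.

Lemma represents_incr i : lt (g i) (g i.+1). Proof. by case: Hf. Qed.

Lemma represents_coef i : f (g i) = s i. Proof. by case: Hf. Qed.

Lemma represents_neq0_le i j : (i <= j)%N -> s j != 0 -> s i != 0.
Proof.
case: Hf => _ _ s0S _ _ /subnKC <-; elim: (j - i)%N => [|k IH]; first by rewrite addn0.
by rewrite addnS => sk1; apply: IH; apply: contraNN sk1 => /eqP /s0S ->.
Qed.

Lemma represents_supp h : f h != 0 -> exists2 i, g i = h & s i != 0.
Proof.
case: Hf => _ _ _ fg fout fh; apply: NNPP => nex; move/eqP: (fh); apply.
apply: fout => i; apply/eqP => gih.
by apply: nex; exists i; rewrite // -fg gih.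
Qed.

Hypothesis HS : semidomain S.

Lemma represents_mem h : f h \in S.
Proof.
have [-> | /represents_supp[i <- _]] := eqVneq (f h) 0; first by case: HS.
by case: Hf => sS _ _ -> _.
Qed.

Lemma represents_monomial : s 1%N = 0 -> monomial f.
Proof.
move=> s1; exists (s 0%N), (g 0%N) => h; case: eqP => [-> | ne_hg0].
  exact: represents_coef.
have [// | /represents_supp[[|i] gih]] := eqVneq (f h) 0; first by case: ne_hg0.
by move/(represents_neq0_le (isT : (1 <= i.+1)%N)); rewrite s1 eqxx.
Qed.

Lemma supp_head a : f a != 0 -> a = g 0%N \/ leG lt (g 1%N) a.
Proof.
case/represents_supp=> -[|i] <- _; [by left | right].
by apply: (leG_incr Hlt represents_incr).
Qed.

Lemma supp_ge_head a : f a != 0 -> leG lt (g 0%N) a.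
Proof.
case/supp_head=> [-> | le1a]; first exact: leG_refl.
exact: (leG_trans Hlt (leG_incr Hlt represents_incr (leqnSn 0)) le1a).
Qed.

Lemma represents_neq0_head h : f h != 0 -> f (g 0%N) != 0.
Proof.
by case/represents_supp=> i _ si; rewrite represents_coef (represents_neq0_le (leq0n i)).
Qed.

Lemma represents_neq0_second h : lt (g 0%N) h -> f h != 0 -> f (g 1%N) != 0.
Proof.
move=> lt0h /represents_supp[[|i] gih si].
  by move: lt0h; rewrite -gih (negbTE (ltG_irr Hlt _)).
by rewrite represents_coef (represents_neq0_le (isT : (1 <= i.+1)%N)).
Qed.

Hypothesis gap : forall i : nat, (1 <= i)%N -> lt (g 1%N - g 0%N) (g i.+1 - g i).

Lemma gap_supp u v : f u != 0 -> f v != 0 -> lt (g 0%N) u -> lt u v ->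
  ~~ leG lt (v - u) (g 1%N - g 0%N).
Proof.
case/represents_supp=> -[|j] <- _; first by rewrite (negbTE (ltG_irr Hlt _)).
case/represents_supp=> k <- _ _ ltjk; apply/negP => le_gap.
have lt_kj : lt (g k) (g j.+2).
  have := ltG_addl Hlt (g j.+1) (leG_ltG_trans Hlt le_gap (gap (ltn0Sn j))).
  by rewrite addrC subrK [_ + (_ - _)]addrC subrK.
have := incr_ltG Hlt represents_incr lt_kj.
by rewrite ltnS leqNgt (incr_ltG Hlt represents_incr ltjk).
Qed.

End Representation.

Section Product.
Variables (R : idomainType) (S : pred R) (G : zmodType).
Hypotheses (HS : semidomain S) (Hred : additively_reduced S).

Lemma addS_eq0 x y : x \in S -> y \in S -> x + y = 0 -> x = 0.
Proof. by move=> xS yS xy0; apply: Hred xS _; exists y. Qed.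

Lemma sumS (T : Type) (l : seq T) (F : T -> R) :
  (forall t, F t \in S) -> \sum_(t <- l) F t \in S.
Proof.
case: HS => S0 _ SD _ FS.
by elim: l => [|t l IH]; rewrite ?big_nil ?big_cons //; apply: SD.
Qed.

Lemma sumS_eq0 (T : eqType) (l : seq T) (F : T -> R) :
  (forall t, F t \in S) -> \sum_(t <- l) F t = 0 -> forall t, t \in l -> F t = 0.
Proof.
move=> FS; elim: l => // t l IH; rewrite big_cons => sum0 x.
have restS := sumS l FS.
rewrite in_cons => /orP[/eqP -> | xl]; first exact: addS_eq0 (FS t) restS sum0.
by apply: IH xl; apply: addS_eq0 restS (FS t) _; rewrite addrC.
Qed.

Variables (p q f : G -> R).
Hypotheses (pS : forall a, p a \in S) (qS : forall b, q b \in S).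
Hypothesis Hpq : is_product p q f.

Lemma mul_supp a b : p a != 0 -> q b != 0 -> f (a + b) != 0.
Proof.
move=> pa qb; have [l [_ memlP ->]] := Hpq (a + b); apply/eqP => sum0.
have abl : (a, b) \in l by apply/memlP.
have FS (ab : G * G) : p ab.1 * q ab.2 \in S by case: HS => _ _ _ -> //.
by move/eqP: (sumS_eq0 FS sum0 abl); rewrite mulf_eq0 (negbTE pa) (negbTE qb).
Qed.

Lemma supp_mul h : f h != 0 -> exists a b, [/\ p a != 0, q b != 0 & a + b = h].
Proof.
have [[|[a b] l] [_ memlP ->]] := Hpq h; first by rewrite big_nil eqxx.
by move=> _; exists a, b; apply/memlP; apply: mem_head.
Qed.

End Product.

Section TwoSmallestExponents.
Variables (R : idomainType) (S : pred R) (G : zmodType) (lt : rel G).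
Hypotheses (HS : semidomain S) (Hred : additively_reduced S).
Hypothesis Hlt : ordered_group lt.
Variables (p q f : G -> R) (sp sq s : nat -> R) (gp gq g : nat -> G).
Hypotheses (Hp : represents S lt p sp gp) (Hq : represents S lt q sq gq).
Hypothesis Hf : represents S lt f s g.
Hypothesis Hpq : is_product p q f.
Hypotheses (sp1 : sp 1%N != 0) (sq1 : sq 1%N != 0).

Let supp_mulpq := mul_supp HS Hred (represents_mem Hp HS) (represents_mem Hq HS) Hpq.

Let p0 : p (gp 0%N) != 0.
Proof. by rewrite (represents_coef Hp) (represents_neq0_le Hp (leq0n 1) sp1). Qed.
Let p1 : p (gp 1%N) != 0. Proof. by rewrite (represents_coef Hp). Qed.
Let q0 : q (gq 0%N) != 0.
Proof. by rewrite (represents_coef Hq) (represents_neq0_le Hq (leq0n 1) sq1). Qed.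
Let q1 : q (gq 1%N) != 0. Proof. by rewrite (represents_coef Hq). Qed.

Lemma supp_mul_ge a b : p a != 0 -> q b != 0 -> leG lt (gp 0%N + gq 0%N) (a + b).
Proof. by move=> pa qb; apply: leG_add (supp_ge_head Hlt Hp pa) (supp_ge_head Hlt Hq qb). Qed.

Lemma mul_head : g 0%N = gp 0%N + gq 0%N.
Proof.
have f00 := supp_mulpq p0 q0.
have [a [b [pa qb abE]]] := supp_mul Hpq (represents_neq0_head Hf f00).
apply: (leG_anti Hlt); first exact: (supp_ge_head Hlt Hf f00).
by rewrite -abE; apply: supp_mul_ge.
Qed.

Lemma mul_second : leG lt (gp 1%N + gq 0%N) (g 1%N) || leG lt (gp 0%N + gq 1%N) (g 1%N).
Proof.
have lt0_10 : lt (g 0%N) (gp 1%N + gq 0%N).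
  by rewrite mul_head; apply/ltG_addr/(represents_incr Hp).
have f_g1 := represents_neq0_second Hlt Hf lt0_10 (supp_mulpq p1 q0).
have [a [b [pa qb abE]]] := supp_mul Hpq f_g1.
rewrite -abE; have [ea | le1a] := supp_head Hlt Hp pa.
  have [eb | le1b] := supp_head Hlt Hq qb.
    by have := represents_incr Hf 0; rewrite mul_head -abE ea eb (negbTE (ltG_irr Hlt _)).
  by rewrite ea (leG_add Hlt (leG_refl _ _) le1b) orbT.
by rewrite (leG_add Hlt le1a (supp_ge_head Hlt Hq qb)).
Qed.

Hypothesis gap : forall i : nat, (1 <= i)%N -> lt (g 1%N - g 0%N) (g i.+1 - g i).

Lemma mul_gap_false : False.
Proof.
have incr_p := represents_incr Hp 0; have incr_q := represents_incr Hq 0.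
case/orP: mul_second => [le_a | le_b].
- have lt0u : lt (g 0%N) (gp 0%N + gq 1%N) by rewrite mul_head; apply: ltG_addl.
  have ltuv : lt (gp 0%N + gq 1%N) (gp 1%N + gq 1%N) by apply: ltG_addr.
  apply: (negP (gap_supp Hlt Hf gap (supp_mulpq p0 q1) (supp_mulpq p1 q1) lt0u ltuv)).
  have := leG_addr Hlt (- (gp 0%N + gq 0%N)) le_a.
  by rewrite mul_head [gp 0%N + gq 1%N]addrC addrKA {1}[gp 0%N + _]addrC addrKA.
- have lt0u : lt (g 0%N) (gp 1%N + gq 0%N) by rewrite mul_head; apply: ltG_addr.
  have ltuv : lt (gp 1%N + gq 0%N) (gp 1%N + gq 1%N) by apply: ltG_addl.
  apply: (negP (gap_supp Hlt Hf gap (supp_mulpq p1 q0) (supp_mulpq p1 q1) lt0u ltuv)).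
  have := leG_addr Hlt (- (gp 0%N + gq 0%N)) le_b.
  by rewrite mul_head [gp 1%N + gq 1%N]addrC addrKA {1}[gp 0%N + gq 1%N]addrC addrKA.
Qed.

End TwoSmallestExponents.

Unset Implicit Arguments.

Theorem lemma4p2 (R : idomainType) (S : pred R) (G : zmodType) (lt : rel G)
  (HS : semidomain S) (Hred : additively_reduced S)
  (HG : torsion_free G) (Hlt : ordered_group lt)
  (f : G -> R) (s : nat -> R) (g : nat -> G)
  (Hf : represents S lt f s g) (Hnz : exists h, f h != 0)
  (Hgap : forall i : nat, (1 <= i)%N -> lt (g 1%N - g 0%N) (g i.+1 - g i)) :
  monolithic S lt f.
Proof.
split=> // p q [sp [gp Hp]] [sq [gq Hq]] Hpq.
have [/(represents_monomial Hp) | sp1] := eqVneq (sp 1%N) 0; first by left.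
have [/(represents_monomial Hq) | sq1] := eqVneq (sq 1%N) 0; first by right.
by case: (mul_gap_false HS Hred Hlt Hp Hq Hf Hpq sp1 sq1 Hgap).
Qed.
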